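(* MCL and OMCL are expressively equivalent: for every MCL sentence over $AP$ there is an OMCL sentence over $AP$ satisfied by exactly the same Kripke trees, and vice versa.
   Context: Kripke trees over a finite set $AP$: non-blocking trees (nonempty prefix-closed sets $T$ of words over a set of directions, root $\varepsilon$, children $w\cdot d$, every node having a child) with $\mathit{Lab}:T\to2^{AP}$. A chain is a set of nodes any two of which are comparable by the descendant relation $\le$ ($x\le y$ iff $y=x\cdot u$ for some possibly empty $u$). MCL: formulas $\varphi::=p(x)\mid x\le y\mid x\in X\mid\neg\varphi\mid\varphi\wedge\varphi\mid\exists x.\varphi\mid\exists^CX.\varphi$ ($p\in AP$), with first-order variables ranging over nodes, $p(x)$ iff $p\in\mathit{Lab}(x)$, and $\exists^CX$ ranging over chains. OMCL (one-sorted MCL): formulas $\varphi::=X\subseteq p\mid X\subseteq Y\mid\mathrm{child}(X,Y)\mid\neg\varphi\mid\varphi\wedge\varphi\mid\exists^CX.\varphi$ with only second-order variables, ranging over chains; $X\subseteq p$ means every node in $X$ has $p$ in its label; $X\subseteq Y$ is set inclusion; $\mathrm{child}(X,Y)$ means every node of $X$ has some child in $Y$. A sentence has no free variables; a Kripke tree satisfies a sentence in the usual way. *)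

From mathcomp Require Import all_boot.
From Stdlib Require Import List.
Import ListNotations.

Set Implicit Arguments.
Unset Strict Implicit.
Unset Printing Implicit Defensive.

(* Nodes are words (lists) over a type [D] of directions; the root is [[]],
   the children of [w] are [w ++ [d]]. *)
Record ktree (D : Type) (AP : finType) := KTree {
  knode : list D -> Prop;
  klab  : list D -> {set AP};
  knode_nonempty : exists w, knode w;
  knode_prefix_closed : forall u v, knode (u ++ v) -> knode u;
  knode_nonblocking : forall w, knode w -> exists d, knode (w ++ [d])
}.

Definition desc {D : Type} (x y : list D) : Prop := exists u, y = x ++ u.

Definition is_chain {D : Type} {AP : finType} (T : ktree D AP)
  (X : list D -> Prop) : Prop :=
  (forall x, X x -> knode T x) /\
  (forall x y, X x -> X y -> desc x y \/ desc y x).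

Inductive mcl (AP : finType) : Type :=
| MProp : AP -> nat -> mcl AP
| MLe   : nat -> nat -> mcl AP
| MIn   : nat -> nat -> mcl AP
| MNeg  : mcl AP -> mcl AP
| MAnd  : mcl AP -> mcl AP -> mcl AP
| MEx   : nat -> mcl AP -> mcl AP
| MExC  : nat -> mcl AP -> mcl AP.

Fixpoint mcl_fv1 {AP : finType} (phi : mcl AP) (n : nat) : Prop :=
  match phi with
  | MProp _ x => x = n
  | MLe x y => x = n \/ y = n
  | MIn x _ => x = n
  | MNeg a => mcl_fv1 a n
  | MAnd a b => mcl_fv1 a n \/ mcl_fv1 b n
  | MEx x a => x <> n /\ mcl_fv1 a n
  | MExC _ a => mcl_fv1 a n
  end.

Fixpoint mcl_fv2 {AP : finType} (phi : mcl AP) (n : nat) : Prop :=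
  match phi with
  | MProp _ _ => False
  | MLe _ _ => False
  | MIn _ X => X = n
  | MNeg a => mcl_fv2 a n
  | MAnd a b => mcl_fv2 a n \/ mcl_fv2 b n
  | MEx _ a => mcl_fv2 a n
  | MExC X a => X <> n /\ mcl_fv2 a n
  end.

Definition mcl_sentence {AP : finType} (phi : mcl AP) : Prop :=
  forall n, ~ mcl_fv1 phi n /\ ~ mcl_fv2 phi n.

Definition upd {A : Type} (e : nat -> A) (n : nat) (a : A) : nat -> A :=
  fun m => if Nat.eqb m n then a else e m.

Fixpoint mcl_holds {D : Type} {AP : finType} (T : ktree D AP)
  (e1 : nat -> list D) (e2 : nat -> list D -> Prop) (phi : mcl AP) : Prop :=
  match phi with
  | MProp p x => p \in klab T (e1 x)
  | MLe x y => desc (e1 x) (e1 y)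
  | MIn x X => e2 X (e1 x)
  | MNeg a => ~ mcl_holds T e1 e2 a
  | MAnd a b => mcl_holds T e1 e2 a /\ mcl_holds T e1 e2 b
  | MEx x a => exists w, knode T w /\ mcl_holds T (upd e1 x w) e2 a
  | MExC X a => exists C, is_chain T C /\ mcl_holds T e1 (upd e2 X C) a
  end.

(* Satisfaction of a sentence: evaluation in a default environment
   (first-order variables at the root, second-order variables the empty
   chain); for sentences the environment is irrelevant. *)
Definition mcl_sat {D : Type} {AP : finType} (T : ktree D AP) (phi : mcl AP)
  : Prop := mcl_holds T (fun _ => []) (fun _ _ => False) phi.

Inductive omcl (AP : finType) : Type :=
| OSubP  : nat -> AP -> omcl AP
| OSub   : nat -> nat -> omcl AP
| OChild : nat -> nat -> omcl AP
| ONeg   : omcl AP -> omcl AP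
| OAnd   : omcl AP -> omcl AP -> omcl AP
| OExC   : nat -> omcl AP -> omcl AP.

Fixpoint omcl_fv {AP : finType} (phi : omcl AP) (n : nat) : Prop :=
  match phi with
  | OSubP X _ => X = n
  | OSub X Y => X = n \/ Y = n
  | OChild X Y => X = n \/ Y = n
  | ONeg a => omcl_fv a n
  | OAnd a b => omcl_fv a n \/ omcl_fv b n
  | OExC X a => X <> n /\ omcl_fv a n
  end.

Definition omcl_sentence {AP : finType} (phi : omcl AP) : Prop :=
  forall n, ~ omcl_fv phi n.

Fixpoint omcl_holds {D : Type} {AP : finType} (T : ktree D AP)
  (e : nat -> list D -> Prop) (phi : omcl AP) : Prop :=
  match phi with
  | OSubP X p => forall w, e X w -> p \in klab T w
  | OSub X Y => forall w, e X w -> e Y w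
  | OChild X Y => forall w, e X w -> exists d, e Y (w ++ [d])
  | ONeg a => ~ omcl_holds T e a
  | OAnd a b => omcl_holds T e a /\ omcl_holds T e b
  | OExC X a => exists C, is_chain T C /\ omcl_holds T (upd e X C) a
  end.

Definition omcl_sat {D : Type} {AP : finType} (T : ktree D AP) (phi : omcl AP)
  : Prop := omcl_holds T (fun _ _ => False) phi.

(* A first-order variable of MCL is simulated in OMCL by a chain variable
   ranging over singletons, a singleton being a nonempty chain contained in
   each of its nonempty subchains.  Then x <= y says that some chain contains
   x and y and, with each of its elements other than x, also its parent: by
   induction on depth such a chain lies above x, and conversely the segment
   from x to y is one.  In the other direction chain quantifiers are kept,
   and X ⊆ p, X ⊆ Y and child(X, Y) are expanded with first-order quantifiers
   over the elements of X, a child of x being a node strictly below x with no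
   node strictly in between. *)

From mathcomp Require Import all_boot zify.
From Stdlib Require Import List PeanoNat Classical.
Import ListNotations.

Arguments MLe {AP} x y.
Arguments MIn {AP} x X.
Arguments OSub {AP} X Y.
Arguments OChild {AP} X Y.

Lemma upd_eq {A : Type} (e : nat -> A) n a : upd e n a n = a.
Proof. by rewrite /upd Nat.eqb_refl. Qed.

Lemma upd_ne {A : Type} (e : nat -> A) n a m : m <> n -> upd e n a m = e m.
Proof. by rewrite /upd => /Nat.eqb_neq ->. Qed.

Tactic Notation "simpl_upd" :=
  repeat first [rewrite upd_eq | rewrite upd_ne; last lia].
Tactic Notation "simpl_upd" "in" hyp(H) :=
  repeat first [rewrite upd_eq in H | rewrite upd_ne in H; last lia].

Section Descendants.
Context {D : Type}.
Implicit Types x y z u : list D.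

Lemma desc_refl x : desc x x.
Proof. by exists []; rewrite app_nil_r. Qed.

Lemma desc_trans {x y z} : desc x y -> desc y z -> desc x z.
Proof. by move=> [u ->] [v ->]; exists (u ++ v); rewrite app_assoc. Qed.

Lemma desc_snoc x y d : desc x y -> desc x (y ++ [d]).
Proof. by move=> [u ->]; exists (u ++ [d]); rewrite app_assoc. Qed.

Lemma desc_strictP {x y} : desc x y -> ~ desc y x <-> length x < length y.
Proof.
move=> [u ->]; rewrite length_app; split=> [not_desc | lt_xy [v]].
- case: u not_desc => [|d u] not_desc /=; last lia.
  by case: not_desc; exists []; rewrite !app_nil_r.
- by move=> /(f_equal (@length D)); rewrite !length_app; lia.
Qed.

Lemma ancestors_comparable {x y z} : desc x z -> desc y z -> desc x y \/ desc y x.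
Proof.
move=> [u ->] [v]; case/app_eq_app=> w [[-> _] | [-> _]].
- by right; exists w.
- by left; exists w.
Qed.

Lemma desc_interval_parent {x y z} : desc x z -> desc z y ->
  z = x \/ exists u d, z = u ++ [d] /\ desc x u /\ desc u y.
Proof.
move=> [s ->] xsy; elim/rev_ind: s xsy => [|d s _] xsy; first by left; rewrite app_nil_r.
right; exists (x ++ s), d; rewrite app_assoc; split=> //; split; first by exists s.
by apply: (desc_trans _ xsy); exists [d]; rewrite app_assoc.
Qed.

Lemma desc_of_parent_closed x (P : list D -> Prop) :
  (forall z, P z -> z = x \/ exists u d, P u /\ z = u ++ [d]) ->
  forall z, P z -> desc x z.
Proof.
move=> parent; suff: forall n z, length z <= n -> P z -> desc x z by move=> H z; exact: H.
elim=> [|n IHn] z le_zn /parent [-> | [u [d [Pu Ez]]]]; try exact: desc_refl;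
  subst z; rewrite length_app /= in le_zn; first lia.
by apply: desc_snoc; apply: IHn => //; lia.
Qed.

End Descendants.

Section Trees.
Context {D : Type} {AP : finType} {T : ktree D AP}.

Lemma knode_prefix x u : knode T (x ++ u) -> knode T x.
Proof. exact: knode_prefix_closed. Qed.

Lemma knode_root : knode T [].
Proof. by case: (knode_nonempty T) => w; exact: (knode_prefix [] w). Qed.

Lemma knode_desc x y : desc x y -> knode T y -> knode T x.
Proof. by move=> [u ->]; apply: knode_prefix. Qed.

Lemma chain_node {C w} : is_chain T C -> C w -> knode T w.
Proof. by case=> + _; apply. Qed.

Lemma empty_chain : is_chain T (fun _ => False).
Proof. by split. Qed.

Lemma singleton_chain {w} : knode T w -> is_chain T (fun v => v = w).
Proof. by split=> [_ -> | _ _ -> ->] //; left; apply: desc_refl. Qed.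

Lemma ancestors_chain y (P : list D -> Prop) :
  knode T y -> (forall w, P w -> desc w y) -> is_chain T P.
Proof.
move=> y_node Py; split=> [w /Py /knode_desc | w1 w2 /Py w1y /Py w2y]; first exact.
exact: ancestors_comparable w1y w2y.
Qed.

End Trees.

Section DerivedOMCL.
Context {AP : finType}.
Implicit Types (f g : omcl AP) (X Y P k : nat).

Definition oforall X f := ONeg (OExC X (ONeg f)).
Definition oimpl f g := ONeg (OAnd f (ONeg g)).
Definition oor f g := ONeg (OAnd (ONeg f) (ONeg g)).

(* The last argument [k] of [oempty] and of the formulas below is the first
   of the fresh variables [k], [k.+1], ... that they bind. *)
Definition oempty X k := oforall k (OSub X k).

Definition osingleton X k :=
  OAnd (ONeg (oempty X k))
       (oforall k (oimpl (OSub k X) (oor (oempty k k.+1) (OSub X k)))).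

Definition oparent_closed X P k :=
  oforall k (oimpl (OAnd (osingleton k k.+2) (OSub k P))
    (oor (OSub k X)
         (OExC k.+1 (OAnd (osingleton k.+1 k.+2)
                          (OAnd (OSub k.+1 P) (OChild k.+1 k)))))).

Definition odesc X Y k :=
  OExC k (OAnd (OSub X k) (OAnd (OSub Y k) (oparent_closed X k k.+1))).

End DerivedOMCL.

Arguments oforall : simpl never.
Arguments oimpl : simpl never.
Arguments oor : simpl never.
Arguments oempty : simpl never.
Arguments osingleton : simpl never.
Arguments oparent_closed : simpl never.
Arguments odesc : simpl never.

Section DerivedOMCLSemantics.
Context {D : Type} {AP : finType} (T : ktree D AP).
Implicit Types (e : nat -> list D -> Prop) (f g : omcl AP).

Lemma holds_oforall e X f :
  omcl_holds T e (oforall X f) <->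
  forall C, is_chain T C -> omcl_holds T (upd e X C) f.
Proof.
split=> [H C chC | H [C [chC]]]; last by apply; apply: H.
by apply: NNPP => nf; apply: H; exists C.
Qed.

Lemma holds_oimpl e f g :
  omcl_holds T e (oimpl f g) <-> (omcl_holds T e f -> omcl_holds T e g).
Proof.
split=> [H ef | H [/H eg]]; last exact.
by apply: NNPP => ng; apply: H.
Qed.

Lemma holds_oor e f g :
  omcl_holds T e (oor f g) <-> omcl_holds T e f \/ omcl_holds T e g.
Proof.
split=> [H | [ef | eg] [] //].
by apply: NNPP => nfg; apply: H; split=> ?; apply: nfg; [left | right].
Qed.

Lemma holds_oempty e X k :
  k <> X -> omcl_holds T e (oempty X k) <-> forall w, ~ e X w.
Proof.
move=> kX; rewrite holds_oforall /=; split=> [H w Xw | H C _ w].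
- by move: (H _ empty_chain w); simpl_upd; apply.
- by simpl_upd => /H.
Qed.

Lemma holds_osingleton e X k :
  k <> X -> (forall w, e X w -> knode T w) ->
  omcl_holds T e (osingleton X k) <-> exists x, forall v, e X v <-> v = x.
Proof.
move=> kX X_node; rewrite /osingleton; cbn; rewrite holds_oempty // holds_oforall.
split=> [[nonempty sub] | [x Xx]].
- have [x Xx] : exists x, e X x.
    by apply: NNPP => none; apply: nonempty => w Xw; apply: none; exists w.
  exists x => v; split=> [Xv | -> //].
  have := sub _ (singleton_chain (X_node v Xv)).
  rewrite holds_oimpl holds_oor holds_oempty; cbn; last lia.
  simpl_upd => H; have [no_v | vX] : (forall w, w <> v) \/ (forall w, e X w -> w = v).
    by apply: H => w ->.
  + by case: (no_v v).
  + by symmetry; apply: vX.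
- split=> [none | C chC]; first exact: none x (proj2 (Xx x) erefl).
  rewrite holds_oimpl holds_oor holds_oempty; cbn; last lia.
  simpl_upd => CX.
  have [[w Cw] | no_C] := classic (exists w, C w); last by left=> w Cw; apply: no_C; exists w.
  right=> v /Xx ->; have /Xx <- := CX w Cw; exact: Cw.
Qed.

Lemma holds_osingleton_upd e X k C :
  is_chain T C -> k <> X ->
  omcl_holds T (upd e X C) (osingleton X k) <-> exists x, forall v, C v <-> v = x.
Proof.
move=> chC kX; rewrite holds_osingleton //; simpl_upd => // w; exact: chain_node.
Qed.

Lemma holds_oparent_closed e X P k x :
  X < k -> P < k -> (forall v, e X v <-> v = x) -> (forall w, e P w -> knode T w) ->
  omcl_holds T e (oparent_closed X P k) <->
  forall z, e P z -> z = x \/ exists u d, e P u /\ z = u ++ [d].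
Proof.
move=> Xk Pk Xx P_node; rewrite /oparent_closed holds_oforall.
split=> [pc z Pz | pc Z chZ].
- have chz := singleton_chain (P_node z Pz).
  have := pc _ chz; rewrite holds_oimpl holds_oor; cbn.
  rewrite holds_osingleton_upd //; last lia.
  simpl_upd; case=> [|zX | [U [chU]]]; first by split; [exists z | move=> w ->].
  + by left; apply/Xx/zX.
  + rewrite holds_osingleton_upd //; last lia.
    simpl_upd => -[[u Uu] [UP Uz]].
    have [d Zud] := Uz u (proj2 (Uu u) erefl).
    by right; exists u, d; split; [apply/UP/Uu | symmetry].
- rewrite holds_oimpl holds_oor; cbn; rewrite holds_osingleton_upd //; last lia.
  simpl_upd => -[[z Zz] ZP].
  have /pc [zx | [u [d [Pu zud]]]] := ZP z (proj2 (Zz z) erefl).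
    by left=> w /Zz ->; apply/Xx.
  have chu := singleton_chain (P_node u Pu).
  right; exists (fun w => w = u); split=> //.
  rewrite holds_osingleton_upd //; last lia.
  simpl_upd; split; first by exists u.
  by split=> w ->; [| exists d; apply/Zz].
Qed.

Lemma holds_odesc e X Y k x y :
  X < k -> Y < k -> (forall v, e X v <-> v = x) -> (forall v, e Y v <-> v = y) ->
  knode T y -> omcl_holds T e (odesc X Y k) <-> desc x y.
Proof.
move=> Xk Yk Xx Yy y_node; rewrite /odesc; cbn.
have parent_closed P : is_chain T P ->
    omcl_holds T (upd e k P) (oparent_closed X k k.+1) <->
    forall z, P z -> z = x \/ exists u d, P u /\ z = u ++ [d].
  move=> chP; rewrite (holds_oparent_closed _ _ _ _ x); [by simpl_upd | lia | lia | by simpl_upd |].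
  by simpl_upd=> w; apply: chain_node.
split=> [[P [chP [_ [YP /(parent_closed _ chP) pc]]]] | xy].
  simpl_upd in YP; apply: (desc_of_parent_closed _ _ pc).
  by apply/YP/Yy.
pose P w := desc x w /\ desc w y.
have chP : is_chain T P by apply: (ancestors_chain _ _ y_node) => w [].
exists P; split=> //; simpl_upd.
split; first by move=> w /Xx ->; split; [apply: desc_refl |].
split; first by move=> w /Yy ->; split; [| apply: desc_refl].
apply/parent_closed=> // z [xz zy].
have [-> | [u [d [-> [xu uy]]]]] := desc_interval_parent xz zy; first by left.
by right; exists u, d.
Qed.

End DerivedOMCLSemantics.

(** * From MCL to OMCL *)

Lemma eq_omcl_holds {D : Type} {AP : finType} (T : ktree D AP) (psi : omcl AP) e e' :
  (forall n, omcl_fv psi n -> forall w, e n w <-> e' n w) ->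
  omcl_holds T e psi <-> omcl_holds T e' psi.
Proof.
elim: psi e e' => [X p | X Y | X Y | a IH | a IHa b IHb | X a IH] e e' /= ee'.
- by split=> H w /(ee' X erefl); apply: H.
- have [eX eY] := (ee' X (or_introl erefl), ee' Y (or_intror erefl)).
  by split=> H w /eX /H /eY.
- have [eX eY] := (ee' X (or_introl erefl), ee' Y (or_intror erefl)).
  by split=> H w /eX /H [d /eY]; exists d.
- by rewrite (IH e e').
- by rewrite (IHa e e') ?(IHb e e') // => n fv; apply: ee'; [right | left].
- have eCa C : omcl_holds T (upd e X C) a <-> omcl_holds T (upd e' X C) a.
    apply: IH => n fv w; have [-> | nX] := Nat.eq_dec n X; simpl_upd => //.
    by apply: ee'; split=> // /esym.
  by split=> -[C [chC /eCa aC]]; exists C.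
Qed.

Lemma omcl_sentence_holds {D : Type} {AP : finType} (T : ktree D AP) (psi : omcl AP) e :
  omcl_sentence psi -> omcl_holds T e psi <-> omcl_sat T psi.
Proof. by move=> psi_sentence; apply: eq_omcl_holds => n /psi_sentence. Qed.

Lemma osingleton_fv {AP : finType} X k n : omcl_fv (@osingleton AP X k) n -> n = X.
Proof. rewrite /osingleton /oempty /oforall /oimpl /oor /=; lia. Qed.

Lemma odesc_fv {AP : finType} X Y k n :
  omcl_fv (@odesc AP X Y k) n -> n = X \/ n = Y.
Proof. rewrite /odesc /oparent_closed /osingleton /oempty /oforall /oimpl /oor /=; lia. Qed.

(* The first-order variable x becomes the chain variable 2x, ranging over
   singletons, and the chain variable X becomes 2X+1. *)
Fixpoint mcl_to_omcl {AP : finType} (phi : mcl AP) : omcl AP :=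
  match phi with
  | MProp p x => OSubP (2 * x) p
  | MLe x y => odesc (2 * x) (2 * y) (2 * x + 2 * y + 1)
  | MIn x X => OSub (2 * x) (2 * X + 1)
  | MNeg a => ONeg (mcl_to_omcl a)
  | MAnd a b => OAnd (mcl_to_omcl a) (mcl_to_omcl b)
  | MEx x a => OExC (2 * x) (OAnd (osingleton (2 * x) (2 * x + 1)) (mcl_to_omcl a))
  | MExC X a => OExC (2 * X + 1) (mcl_to_omcl a)
  end.

Lemma omcl_fv_mcl_to_omcl {AP : finType} (phi : mcl AP) m :
  omcl_fv (mcl_to_omcl phi) m ->
  (exists n, m = 2 * n /\ mcl_fv1 phi n) \/ (exists n, m = 2 * n + 1 /\ mcl_fv2 phi n).
Proof.
elim: phi m => [p x | x y | x X | a IH | a IHa b IHb | x a IH | X a IH] m; cbn.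
- by move=> <-; left; exists x.
- by case/odesc_fv=> ->; left; [exists x | exists y]; split=> //; [left | right].
- by case=> <-; [left; exists x | right; exists X].
- exact: IH.
- by case=> [/IHa | /IHb] [] [n [-> fv]]; [left | right | left | right]; exists n; tauto.
- case=> mx [/osingleton_fv | /IH [] [n [mn fv]]]; first lia.
  + by left; exists n; split=> //; split=> //; lia.
  + by right; exists n.
- case=> mX /IH [] [n [mn fv]]; first by left; exists n.
  by right; exists n; split=> //; split=> //; lia.
Qed.

Lemma mcl_to_omcl_sentence {AP : finType} (phi : mcl AP) :
  mcl_sentence phi -> omcl_sentence (mcl_to_omcl phi).
Proof.
move=> phi_sentence m /omcl_fv_mcl_to_omcl [] [n [_ fv]].
- exact: (proj1 (phi_sentence n)).
- exact: (proj2 (phi_sentence n)).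
Qed.

Section MCLToOMCL.
Context {D : Type} {AP : finType} (T : ktree D AP).

Definition encodes_env (e1 : nat -> list D) (e2 e : nat -> list D -> Prop) :=
  forall n, knode T (e1 n) /\ (forall w, e (2 * n) w <-> w = e1 n) /\
            (forall w, e (2 * n + 1) w <-> e2 n w).

Lemma encodes_env_upd_node e1 e2 e x w (C : list D -> Prop) :
  encodes_env e1 e2 e -> knode T w -> (forall v, C v <-> v = w) ->
  encodes_env (upd e1 x w) e2 (upd e (2 * x) C).
Proof.
move=> enc w_node Cw n; have [-> | nx] := Nat.eq_dec n x; simpl_upd; last exact: enc.
by have [_ [_ e2x]] := enc x.
Qed.

Lemma encodes_env_upd_chain e1 e2 e X (C : list D -> Prop) :
  encodes_env e1 e2 e -> encodes_env e1 (upd e2 X C) (upd e (2 * X + 1) C).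
Proof.
move=> enc n; have [-> | nX] := Nat.eq_dec n X; simpl_upd; last exact: enc.
by have [X_node [eX _]] := enc X.
Qed.

Lemma mcl_to_omcl_correct (phi : mcl AP) e1 e2 e :
  encodes_env e1 e2 e ->
  mcl_holds T e1 e2 phi <-> omcl_holds T e (mcl_to_omcl phi).
Proof.
elim: phi e1 e2 e => [p x | x y | x X | a IH | a IHa b IHb | x a IH | X a IH] e1 e2 e enc.
all: cbn.
- have [_ [ex _]] := enc x.
  by split=> [px w /ex -> | H]; last exact/H/ex.
- have [_ [ex _]] := enc x; have [y_node [ey _]] := enc y.
  by rewrite (holds_odesc T e _ _ _ (e1 x) (e1 y)) //; lia.
- have [_ [ex _]] := enc x; have [_ [_ eX]] := enc X.
  by split=> [xX w /ex -> | H]; [apply/eX | apply/eX/H/ex].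
- by rewrite (IH e1 e2 e).
- by rewrite (IHa e1 e2 e) ?(IHb e1 e2 e).
- split=> [[w [w_node aw]] | [C [chC []]]].
  + have chw := singleton_chain w_node; exists (fun v => v = w); split=> //.
    rewrite holds_osingleton_upd //; last lia.
    split; first by exists w.
    exact/(IH _ e2)/aw/encodes_env_upd_node.
  + rewrite holds_osingleton_upd //; last lia.
    move=> [w Cw] /(IH (upd e1 x w) e2) aw.
    have w_node : knode T w by apply: (chain_node chC); apply/Cw.
    by exists w; split=> //; apply/aw/encodes_env_upd_node.
- have IHC C := IH _ _ _ (encodes_env_upd_chain _ _ _ X C enc).
  by split=> -[C [chC /IHC aC]]; exists C.
Qed.

Lemma mcl_to_omcl_sat (phi : mcl AP) :
  mcl_sentence phi -> mcl_sat T phi <-> omcl_sat T (mcl_to_omcl phi).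
Proof.
move=> phi_sentence; pose e m (w : list D) := (exists n, m = 2 * n) /\ w = [].
rewrite -(omcl_sentence_holds T _ e); last exact: mcl_to_omcl_sentence.
apply: mcl_to_omcl_correct => n; split; first exact: knode_root.
split=> w; first by split=> [[_ ->] | ->] //; split=> //; exists n.
by split=> [[[n' ?] _] | []]; first lia.
Qed.

End MCLToOMCL.

(** * From OMCL to MCL *)

Section DerivedMCL.
Context {AP : finType}.
Implicit Types (f : mcl AP) (x y z X : nat).

Definition mlt x y : mcl AP := MAnd (MLe x y) (MNeg (MLe y x)).

Definition mchild x y z : mcl AP := MAnd (mlt x y) (MNeg (MEx z (MAnd (mlt x z) (mlt z y)))).

Definition mall_in x X f := MNeg (MEx x (MAnd (MIn x X) (MNeg f))).

End DerivedMCL.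

Arguments mlt : simpl never.
Arguments mchild : simpl never.
Arguments mall_in : simpl never.

Section DerivedMCLSemantics.
Context {D : Type} {AP : finType} (T : ktree D AP).

Lemma holds_mchild (e1 : nat -> list D) e2 x y z :
  z <> x -> z <> y -> knode T (e1 y) ->
  mcl_holds T e1 e2 (mchild x y z) <-> exists d, e1 y = e1 x ++ [d].
Proof.
move=> zx zy y_node; rewrite /mchild /mlt /=.
split=> [[[[u yu] not_yx] no_between] | [d yd]].
- case: u yu => [|d [|d' u]] yu; last 1 first.
  + have xm : desc (e1 x) (e1 x ++ [d]) by exists [d].
    have my : desc (e1 x ++ [d]) (e1 y) by exists (d' :: u); rewrite yu -app_assoc.
    case: no_between; exists (e1 x ++ [d]); split; first exact: knode_desc my y_node.
    simpl_upd; split; split=> //.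
    * by apply/(desc_strictP xm); rewrite length_app /=; lia.
    * by apply/(desc_strictP my); rewrite yu !length_app /=; lia.
  + by case: not_yx; exists []; rewrite yu !app_nil_r.
  + by exists d.
- have xy : desc (e1 x) (e1 y) by exists [d].
  split; first by split=> //; apply/(desc_strictP xy); rewrite yd length_app /=; lia.
  move=> [m [_]]; simpl_upd => -[[xm /(desc_strictP xm) lt_xm] [my /(desc_strictP my)]].
  by rewrite yd length_app /=; lia.
Qed.

Lemma holds_mall_in (e1 : nat -> list D) e2 x X f :
  (forall w, e2 X w -> knode T w) ->
  mcl_holds T e1 e2 (mall_in x X f) <->
  forall w, e2 X w -> mcl_holds T (upd e1 x w) e2 f.
Proof.
move=> X_node; rewrite /mall_in /=.
split=> [no_counter w Xw | all_f [w [_]]]; last by simpl_upd => -[/all_f f_w]; apply.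
apply: NNPP => not_f; apply: no_counter; exists w.
by simpl_upd; split; first exact: X_node.
Qed.

End DerivedMCLSemantics.

Fixpoint omcl_to_mcl {AP : finType} (psi : omcl AP) : mcl AP :=
  match psi with
  | OSubP X p => mall_in 0 X (MProp p 0)
  | OSub X Y => mall_in 0 X (MIn 0 Y)
  | OChild X Y => mall_in 0 X (MEx 1 (MAnd (MIn 1 Y) (mchild 0 1 2)))
  | ONeg a => MNeg (omcl_to_mcl a)
  | OAnd a b => MAnd (omcl_to_mcl a) (omcl_to_mcl b)
  | OExC X a => MExC X (omcl_to_mcl a)
  end.

Lemma mcl_fv_omcl_to_mcl {AP : finType} (psi : omcl AP) n :
  ~ mcl_fv1 (omcl_to_mcl psi) n /\ (mcl_fv2 (omcl_to_mcl psi) n -> omcl_fv psi n).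
Proof.
elim: psi => [X p | X Y | X Y | a IH | a IHa b IHb | X a IH] /=;
  rewrite /mall_in /mchild /mlt /=; first [lia | tauto].
Qed.

Lemma omcl_to_mcl_sentence {AP : finType} (psi : omcl AP) :
  omcl_sentence psi -> mcl_sentence (omcl_to_mcl psi).
Proof.
move=> psi_sentence n; have [not_fv1 fv2] := mcl_fv_omcl_to_mcl psi n.
by split=> // /fv2; apply: psi_sentence.
Qed.

Section OMCLToMCL.
Context {D : Type} {AP : finType} (T : ktree D AP).

Lemma omcl_to_mcl_correct (psi : omcl AP) (e1 : nat -> list D) e :
  (forall n w, e n w -> knode T w) ->
  mcl_holds T e1 e (omcl_to_mcl psi) <-> omcl_holds T e psi.
Proof.
elim: psi e1 e => [X p | X Y | X Y | a IH | a IHa b IHb | X a IH] e1 e e_node; cbn.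
1-3: rewrite holds_mall_in; last exact: e_node.
- by split=> H w /H; simpl_upd.
- by split=> H w /H; simpl_upd.
- split=> H w /H; cbn; simpl_upd.
  + move=> [v [v_node [Yv]]]; simpl_upd in Yv.
    rewrite holds_mchild; simpl_upd => //.
    by move=> [d vd]; exists d; rewrite -vd.
  + move=> [d Yd]; exists (w ++ [d]); split; first exact: e_node Yd.
    simpl_upd; split=> //.
    by rewrite holds_mchild; simpl_upd; [exists d | | | exact: e_node Yd].
- by rewrite (IH e1 e).
- by rewrite (IHa e1 e) ?(IHb e1 e).
- have IHC C : is_chain T C ->
      mcl_holds T e1 (upd e X C) (omcl_to_mcl a) <-> omcl_holds T (upd e X C) a.
    move=> chC; apply: IH => n w; have [-> | nX] := Nat.eq_dec n X; simpl_upd.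
      exact: chain_node.
    exact: e_node.
  by split=> -[C [chC /(IHC _ chC) aC]]; exists C.
Qed.

Lemma omcl_to_mcl_sat (psi : omcl AP) :
  mcl_sat T (omcl_to_mcl psi) <-> omcl_sat T psi.
Proof. exact: omcl_to_mcl_correct. Qed.

End OMCLToMCL.

Theorem proposition29 (AP : finType) :
  (forall phi : mcl AP, mcl_sentence phi ->
     exists psi : omcl AP, omcl_sentence psi /\
       forall (D : Type) (T : ktree D AP), mcl_sat T phi <-> omcl_sat T psi) /\
  (forall psi : omcl AP, omcl_sentence psi ->
     exists phi : mcl AP, mcl_sentence phi /\
       forall (D : Type) (T : ktree D AP), mcl_sat T phi <-> omcl_sat T psi).
Proof.
split=> [phi phi_sentence | psi psi_sentence].
- exists (mcl_to_omcl phi); split; first exact: mcl_to_omcl_sentence.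
  by move=> D T; apply: mcl_to_omcl_sat.
- exists (omcl_to_mcl psi); split; first exact: omcl_to_mcl_sentence.
  by move=> D T; apply: omcl_to_mcl_sat.
Qed.
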